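(* Let $\mathcal{G}$ be a hereditary class of graphs (i.e., $G\in\mathcal{G}$ implies $G'\in\mathcal{G}$ for every subgraph $G'$ of $G$) such that $|E(G)|\le \ell\cdot|V(G)|$ for every $G\in\mathcal{G}$, for some constant $\ell$. Then for every $G\in\mathcal{G}$ and every terminal set $\mathcal{T}\subseteq V(G)$, $\mathrm{DegCost}^*(\mathcal{T})\le 2\ell\cdot q^*(\mathcal{T})$.
   Context: For $u\in V(G)$, $N[u]$ is $u$ together with its neighbors; for a subgraph $G'$, $N[G']=\bigcup_{u\in V(G')}N[u]$ and $\mathrm{Cost}(G')=|N[G']|$. $\mathrm{DegCost}(G')$ is the sum over nodes of $G'$ of their degrees in $G$. A Steiner tree for $\mathcal{T}$ is a tree $T\subseteq G$ with $\mathcal{T}\subseteq V(T)$. $q^*(\mathcal{T})=\min\mathrm{Cost}(T)$ and $\mathrm{DegCost}^*(\mathcal{T})=\min\mathrm{DegCost}(T)$, both minima over Steiner trees $T$ for $\mathcal{T}$. *)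

From mathcomp Require Import all_boot all_order all_algebra.
Set Implicit Arguments. Unset Strict Implicit. Unset Printing Implicit Defensive.
Import Order.TTheory GRing.Theory Num.Theory.

Section Graphs.
Variable T : finType.

Definition is_graph (V : {set T}) (E : {set {set T}}) : Prop :=
  forall e, e \in E -> (e \subset V) /\ #|e| = 2.

Definition subgraph (V' : {set T}) (E' : {set {set T}})
    (V : {set T}) (E : {set {set T}}) : Prop :=
  is_graph V' E' /\ V' \subset V /\ E' \subset E.

Definition adj (E : {set {set T}}) : rel T := fun x y => [set x; y] \in E.

Definition connected (V' : {set T}) (E' : {set {set T}}) : Prop :=
  forall u v, u \in V' -> v \in V' ->
    exists p : seq T, path (adj E') u p && (last u p == v).

Definition acyclic (E' : {set {set T}}) : Prop :=
  forall c : seq T, uniq c -> 3 <= size c -> ~~ cycle (adj E') c.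

Definition is_tree (V' : {set T}) (E' : {set {set T}}) : Prop :=
  V' != set0 /\ connected V' E' /\ acyclic E'.

Definition steiner_tree (V : {set T}) (E : {set {set T}}) (Tm : {set T})
    (V' : {set T}) (E' : {set {set T}}) : Prop :=
  subgraph V' E' V E /\ is_tree V' E' /\ Tm \subset V'.

Definition closed_nbhd (V : {set T}) (E : {set {set T}}) (u : T) : {set T} :=
  u |: [set v in V | adj E u v].

Definition nbhd_sub (V : {set T}) (E : {set {set T}}) (V' : {set T}) : {set T} :=
  \bigcup_(u in V') closed_nbhd V E u.

Definition Cost (V : {set T}) (E : {set {set T}}) (V' : {set T}) : nat :=
  #|nbhd_sub V E V'|.

Definition deg (V : {set T}) (E : {set {set T}}) (u : T) : nat :=
  #|[set v in V | adj E u v]|.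

Definition DegCost (V : {set T}) (E : {set {set T}}) (V' : {set T}) : nat :=
  \sum_(u in V') deg V E u.

End Graphs.

Definition graph_class := forall T : finType, {set T} -> {set {set T}} -> Prop.

Definition hereditary (C : graph_class) : Prop :=
  forall (T : finType) (V V' : {set T}) (E E' : {set {set T}}),
    is_graph V E -> C T V E -> subgraph V' E' V E -> C T V' E'.

From mathcomp Require Import all_boot all_order all_algebra.
Import Order.TTheory GRing.Theory Num.Theory.
Set Implicit Arguments. Unset Strict Implicit. Unset Printing Implicit Defensive.

(* Given a Steiner tree with vertex set V', take the subgraph H of G formed by
   N[V'] and the edges meeting V'. H lies in the class, so it has at most
   l |N[V']| edges; every edge at a node of V' is an edge of H, so double
   counting gives DegCost(V') <= 2 |E(H)| <= 2 l Cost(V'). Hence the same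
   tree already witnesses the bound. *)

Section IncidentEdges.
Variables (T : finType) (V : {set T}) (E : {set {set T}}).
Hypothesis graphE : is_graph V E.

Definition incident_edges (V' : {set T}) : {set {set T}} :=
  [set e in E | e :&: V' != set0].

Lemma card_edges_at_sum (F : {set {set T}}) : F \subset E ->
  (\sum_u #|[set e in F | u \in e]| = 2 * #|F|)%N.
Proof.
move=> sFE.
under eq_bigr => u _ do rewrite -sum1_card big_mkcond /=.
rewrite exchange_big /= mulnC -sum_nat_const [RHS]big_mkcond /=.
apply: eq_bigr => e _; case: ifP => eF; last by apply: big1 => u _; rewrite inE eF.
have [_ <-] := graphE (subsetP sFE e eF).
by rewrite -sum1_card [RHS]big_mkcond; apply: eq_bigr => u _; rewrite !inE eF.
Qed.

Lemma deg_le_card_incident (V' : {set T}) u : u \in V' ->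
  (deg V E u <= #|[set e in incident_edges V' | u \in e]|)%N.
Proof.
move=> uV'; have inj_pair : injective (fun v => [set u; v]).
  move=> v w uv_uw; have : v \in [set u; w] by rewrite -uv_uw set22.
  have : w \in [set u; v] by rewrite uv_uw set22.
  by rewrite !inE => /orP[/eqP-> | /eqP-> //] /orP[/eqP-> | /eqP->].
rewrite /deg -(card_imset _ inj_pair); apply/subset_leq_card/subsetP => e.
case/imsetP=> v; rewrite inE => /andP[_ uvE] ->.
rewrite inE set21 andbT inE; apply/andP; split; first exact: uvE.
by apply/set0Pn; exists u; rewrite !inE eqxx.
Qed.

Lemma DegCost_le_incident_edges (V' : {set T}) :
  (DegCost V E V' <= 2 * #|incident_edges V'|)%N.
Proof.
rewrite -card_edges_at_sum; last by apply/subsetP => e; rewrite inE => /andP[].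
rewrite [X in (_ <= X)%N](bigID (mem V')) /=.
by apply/leq_trans/leq_addr/leq_sum => u; apply: deg_le_card_incident.
Qed.

Lemma incident_edge_sub_nbhd (V' : {set T}) e :
  e \in incident_edges V' -> e \subset nbhd_sub V E V'.
Proof.
rewrite inE => /andP[eE /set0Pn[x]]; rewrite inE => /andP[xe xV'].
have [eV ce] := graphE eE.
apply/subsetP => w we; apply/bigcupP; exists x => //.
rewrite /closed_nbhd !inE (subsetP eV w we) /=.
case: (eqVneq w x) => //= wx; rewrite /adj.
suff -> : [set x; w] = e by [].
apply/eqP; rewrite eqEcard ce cards2 eq_sym wx andbT.
by apply/subsetP => y; rewrite !inE => /orP[]/eqP->.
Qed.

Lemma incident_subgraph (V' : {set T}) : V' \subset V ->
  subgraph (nbhd_sub V E V') (incident_edges V') V E.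
Proof.
move=> sV'V; split; [|split].
- move=> e eI; split; first exact: incident_edge_sub_nbhd.
  by move: eI; rewrite inE => /andP[/graphE[]].
- apply/bigcupsP => u uV'; apply/subsetP => w.
  by rewrite !inE => /orP[/eqP-> | /andP[]//]; apply: (subsetP sV'V).
- by apply/subsetP => e; rewrite inE => /andP[].
Qed.

End IncidentEdges.

Local Open Scope ring_scope.

Theorem proposition1 (R : realFieldType) (C : graph_class) (l : R) :
  hereditary C ->
  (forall (T : finType) (V : {set T}) (E : {set {set T}}),
      is_graph V E -> C T V E -> (#|E|%:R <= l * #|V|%:R)) ->
  forall (T : finType) (V : {set T}) (E : {set {set T}}) (Tm : {set T}),
    is_graph V E -> C T V E -> Tm \subset V ->
    forall (V2 : {set T}) (E2 : {set {set T}}),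
      steiner_tree V E Tm V2 E2 ->
      exists (V1 : {set T}) (E1 : {set {set T}}),
        steiner_tree V E Tm V1 E1 /\
        (DegCost V E V1)%:R <= 2 * l * (Cost V E V2)%:R.
Proof.
move=> herC sparseC T V E Tm graphE CE _ V2 E2 st2.
exists V2, E2; split => //.
have [[_ [sV2V _]] _] := st2.
have subH := incident_subgraph graphE sV2V.
have sparseH := sparseC _ _ _ (proj1 subH) (herC _ _ _ _ _ graphE CE subH).
apply: (le_trans (y := (2 * #|incident_edges E V2|)%N%:R)).
  by rewrite ler_nat DegCost_le_incident_edges.
by rewrite natrM -mulrA ler_pM2l // ltr0n.
Qed.
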